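(* Let $I\subseteq\mathbb K[x_1,\dots,x_n]$ be an $\mathfrak m$-primary monomial ideal with $\mu_i=x_i^{d_i}\in G(I)$, and let $J=\langle\mu_1,\dots,\mu_n\rangle$. Then $I$ is very good if and only if $I^2=IJ$.
   Context: Let $\mathbb K$ be a field, $R=\mathbb K[x_1,\dots,x_n]$, $\mathfrak m=\langle x_1,\dots,x_n\rangle$, $\mathbb N=\{0,1,2,\dots\}$. A monomial $x_1^{\alpha_1}\cdots x_n^{\alpha_n}$ is identified with the point $(\alpha_1,\dots,\alpha_n)\in\mathbb N^n$. For a monomial ideal $I$, $G(I)$ denotes its (unique) minimal monomial generating set. If $I$ is an $\mathfrak m$-primary monomial ideal, then for each $i$ there is a unique $d_i\ge1$ with $x_i^{d_i}\in G(I)$; write $\mu_i=x_i^{d_i}$. For $(a_1,\dots,a_n)\in\mathbb N^n$ the box associated to $I$ is $B_{a_1,\dots,a_n}=([a_1d_1,(a_1+1)d_1]\times\cdots\times[a_nd_n,(a_n+1)d_n])\cap\mathbb N^n$; a monomial belongs to a box if its exponent vector does. An $\mathfrak m$-primary monomial ideal $I$ is called good if for every integer $l\ge1$, every element of $G(I^l)$ belongs to some box $B_{a_1,\dots,a_n}$ with $a_1+\dots+a_n=l-1$. For a good ideal $I$ and $a=(a_1,\dots,a_n)\in\mathbb N^n$, with $l=a_1+\dots+a_n+1$, define $I_{a_1,\dots,a_n}=\left\langle \frac{m}{\mu_1^{a_1}\cdots\mu_n^{a_n}} : m\in B_{a_1,\dots,a_n}\cap G(I^l)\right\rangle$. A good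 ideal $I$ is called very good if $I_{a}=I$ for all $a\in\mathbb N^n$. *)

(* Monomial ideals of K[x_1,...,x_n] are modelled by their
   sets of monomials, i.e. sets of exponent vectors in N^n. *)
From mathcomp Require Import all_boot.
Set Implicit Arguments. Unset Strict Implicit. Unset Printing Implicit Defensive.

Definition mono (n : nat) := {ffun 'I_n -> nat}.

Definition mdiv n (a b : mono n) : Prop := forall i, a i <= b i.

Definition madd n (a b : mono n) : mono n := [ffun i => a i + b i].

Definition xpow n (i : 'I_n) (k : nat) : mono n := [ffun j => if j == i then k else 0].

Definition mset n := mono n -> Prop.

Definition is_monomial_ideal n (I : mset n) : Prop :=
  forall a b, I a -> mdiv a b -> I b.

Definition gen n (S : mset n) : mset n := fun m => exists2 s, S s & mdiv s m.

Definition ideal_eq n (I J : mset n) : Prop := forall m, I m <-> J m.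

Definition imul n (I J : mset n) : mset n :=
  fun m => exists a b, [/\ I a, J b & mdiv (madd a b) m].

Definition ione n : mset n := fun _ => True.
Arguments ione : clear implicits.

Fixpoint ipow n (I : mset n) (l : nat) : mset n :=
  if l is l'.+1 then imul I (ipow I l') else ione n.

Definition G n (I : mset n) : mset n :=
  fun m => I m /\ forall m', I m' -> mdiv m' m -> m' = m.

Definition m_primary n (I : mset n) : Prop :=
  is_monomial_ideal I /\ ~ I [ffun _ => 0] /\ forall i, exists k, I (xpow i k).

Definition in_box n (d : 'I_n -> nat) (a : mono n) (m : mono n) : Prop :=
  forall i, a i * d i <= m i <= (a i).+1 * d i.

Definition asum n (a : mono n) : nat := \sum_(i < n) a i.

Definition good n (I : mset n) (d : 'I_n -> nat) : Prop :=
  forall l, 1 <= l -> forall m, G (ipow I l) m ->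
    exists a : mono n, asum a = l.-1 /\ in_box d a m.

(* I_{a} = < m / (mu_1^{a_1} ... mu_n^{a_n}) : m in B_a cap G(I^l) >, l = |a|+1 *)
Definition Ia n (I : mset n) (d : 'I_n -> nat) (a : mono n) : mset n :=
  gen (fun q => exists m, [/\ G (ipow I (asum a).+1) m, in_box d a m &
                            q = [ffun i => m i - a i * d i]]).

Definition very_good n (I : mset n) (d : 'I_n -> nat) : Prop :=
  good I d /\ forall a : mono n, ideal_eq (Ia I d a) I.

Definition Jpure n (d : 'I_n -> nat) : mset n :=
  gen (fun q => exists i, q = xpow i (d i)).

From mathcomp Require Import all_boot zify.
From Stdlib Require Import Classical.
Set Implicit Arguments. Unset Strict Implicit. Unset Printing Implicit Defensive.

(* If I^2 = IJ then, by induction, I^(l+1) = I J^l, so every element of I^(l+1)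
   is a multiple of some h mu^b with h in I and |b| = l.  The minimal generators
   of I^(l+1) are then exactly the products g mu^b with g in G(I) and |b| = l:
   two such products with |a| = |b| divide each other only if they coincide,
   the sole possible coincidence being the exchange mu_k mu^a = mu_j mu^b with
   a + e_k = b + e_j.  As g_i <= d_i for g in G(I), g mu^b lies in the box B_b,
   so I is good, and dividing by mu^a gives back G(I), so I_a = I.  Conversely,
   a minimal generator of I^2 lies in a box B_a with |a| = 1, i.e. a = e_k, and
   its quotient by mu_k lies in I_a = I, whence I^2 is contained in IJ. *)

Section Monomials.
Variable n : nat.
Implicit Types (a b c g h m x y : mono n) (i j k : 'I_n).

Lemma mdiv_trans a b m : mdiv a b -> mdiv b m -> mdiv a m.
Proof. by move=> ab bm i; apply: leq_trans (ab i) (bm i). Qed.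

Lemma mdiv_anti a b : mdiv a b -> mdiv b a -> a = b.
Proof. by move=> ab ba; apply/ffunP=> i; apply/eqP; rewrite eqn_leq ab ba. Qed.

Lemma maddC a b : madd a b = madd b a.
Proof. by apply/ffunP => i; rewrite !ffunE addnC. Qed.

Lemma mdiv_madd2r a b c : mdiv a b -> mdiv (madd a c) (madd b c).
Proof. by move=> ab i; rewrite !ffunE leq_add2r. Qed.

Lemma asum_madd a b : asum (madd a b) = asum a + asum b.
Proof. by rewrite /asum -big_split; apply: eq_bigr => i _; rewrite ffunE. Qed.

Lemma asum_xpow i (c : nat) : asum (xpow i c) = c.
Proof.
rewrite /asum (bigD1 i) //= big1 => [|j /negbTE ji]; last by rewrite ffunE ji.
by rewrite ffunE eqxx addn0.
Qed.

Lemma mdiv_asum_eq a b : mdiv a b -> asum b <= asum a -> a = b.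
Proof.
move=> ab ba; apply: mdiv_anti => // i.
have /eqP : \sum_(j < n) (b j - a j) = 0 by rewrite sumnB //; apply/eqP; rewrite subn_eq0.
by rewrite sum_nat_eq0 => /forallP/(_ i); rewrite subn_eq0.
Qed.

Lemma mdiv_asum_lt a b : mdiv a b -> a <> b -> asum a < asum b.
Proof. by move=> ab; apply: contra_not_ltn; apply: mdiv_asum_eq. Qed.

Lemma asum_lt_exists x y : asum x < asum y -> exists i, x i < y i.
Proof.
move=> lt; apply/existsP; apply: contraLR lt => /existsPn yx.
by rewrite -leqNgt; apply: leq_sum => i _; rewrite leqNgt yx.
Qed.

Lemma asum_eq_cases a b : asum a = asum b -> a = b \/ exists i, b i < a i.
Proof.
move=> eq_ab; case: (boolP [forall i, a i <= b i]) => [/forallP ab | /forallPn [i]].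
  by left; apply: mdiv_asum_eq; rewrite // eq_ab.
by rewrite -ltnNge; right; exists i.
Qed.

Lemma asum_succ_split b l :
  asum b = l.+1 -> exists k b', b = madd b' (xpow k 1) /\ asum b' = l.
Proof.
move=> sb; have [|k bk] := asum_lt_exists (x := [ffun => 0]) (y := b).
  by rewrite sb /asum big1 // => i _; rewrite ffunE.
rewrite ffunE in bk.
have eb : b = madd [ffun i => b i - (i == k)] (xpow k 1).
  by apply/ffunP => i; rewrite !ffunE; case: eqP => [->|] /=; lia.
exists k, [ffun i => b i - (i == k)]; split => //.
by move: sb; rewrite [in asum b]eb asum_madd asum_xpow addn1 => -[].
Qed.

Lemma mdiv_exchange x y k :
  mdiv x (madd y (xpow k 1)) -> asum x = asum y ->
  exists j, madd x (xpow j 1) = madd y (xpow k 1).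
Proof.
move=> le sxy; have [|j lt] := asum_lt_exists (x := x) (y := madd y (xpow k 1)).
  by rewrite asum_madd asum_xpow sxy addn1.
exists j; apply: mdiv_asum_eq; last by rewrite !asum_madd !asum_xpow sxy.
by move=> i; move: (le i) lt; rewrite !ffunE; case: (i =P j) => [->|] /=; lia.
Qed.

Lemma G_exists (S : mset n) m : S m -> exists2 g, G S g & mdiv g m.
Proof.
have [k] := ubnP (asum m); elim: k m => // k IH m mk Sm.
case: (classic (exists m', [/\ S m', mdiv m' m & m' <> m])) => [[m' [Sm' m'm ne]] | min_m].
  have [g Gg gm'] := IH m' (leq_trans (mdiv_asum_lt m'm ne) mk) Sm'.
  by exists g => //; apply: mdiv_trans gm' m'm.
exists m => //; split => // m' Sm' m'm.
by apply: NNPP => ne; apply: min_m; exists m'.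
Qed.

End Monomials.

Section PurePowers.
Variables (n : nat) (I : mset n) (d : 'I_n -> nat).
Hypothesis I_ideal : is_monomial_ideal I.
Hypothesis d_gt0 : forall i, 0 < d i.
Hypothesis G_xpow : forall i, G I (xpow i (d i)).
Implicit Types (a b g h m : mono n) (i j k : 'I_n).

(* the exponent vector of mu^b = mu_1^(b_1) ... mu_n^(b_n) *)
Definition mupow b : mono n := [ffun i => b i * d i].

Lemma mupow_madd a b : mupow (madd a b) = madd (mupow a) (mupow b).
Proof. by apply/ffunP => i; rewrite !ffunE mulnDl. Qed.

Lemma mupow_xpow1 k : mupow (xpow k 1) = xpow k (d k).
Proof. by apply/ffunP => i; rewrite !ffunE; case: (i =P k) => [->|] /=; lia. Qed.

Lemma I_xpow k : I (xpow k (d k)).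
Proof. by case: (G_xpow k). Qed.

Lemma G_eq_xpow g k : G I g -> d k <= g k -> g = xpow k (d k).
Proof.
move=> [Ig min_g] le_dg; apply/esym/min_g; first exact: I_xpow.
by move=> i; rewrite ffunE; case: (i =P k) => [->|].
Qed.

Lemma G_le_d g i : G I g -> g i <= d i.
Proof.
move=> Gg; rewrite leqNgt; apply/negP => lt_dg.
by have := lt_dg; rewrite (G_eq_xpow Gg (ltnW lt_dg)) ffunE eqxx ltnn.
Qed.

Lemma in_box_mupow g b : G I g -> in_box d b (madd g (mupow b)).
Proof. by move=> Gg i; rewrite !ffunE; have := G_le_d i Gg; nia. Qed.

Lemma ipow1 m : I m -> ipow I 1 m.
Proof. by move=> Im; exists m, [ffun => 0]; split => // i; rewrite !ffunE addn0. Qed.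

Lemma ipow2_madd a b : I a -> I b -> ipow I 2 (madd a b).
Proof. by move=> Ia Ib; exists a, b; split => //; apply: ipow1. Qed.

Lemma ipow_mupow h b l : I h -> asum b = l -> ipow I l.+1 (madd h (mupow b)).
Proof.
elim: l b => [|l IH] b Ih sb; first by exists h, (mupow b); split.
have [k [b' [-> sb']]] := asum_succ_split sb.
exists (xpow k (d k)), (madd h (mupow b')); split; [exact: I_xpow | exact: IH |].
rewrite mupow_madd mupow_xpow1 => i; rewrite !ffunE; lia.
Qed.

Lemma mdiv_mupow_eq h g a b :
  I h -> G I g -> asum b = asum a ->
  mdiv (madd h (mupow b)) (madd g (mupow a)) -> madd h (mupow b) = madd g (mupow a).
Proof.
move=> Ih Gg sba; case: (asum_eq_cases sba) => [-> le_hg | [k lt_ab] le_hg].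
  have [_ min_g] := Gg; rewrite (min_g h Ih) // => i.
  by move: (le_hg i); rewrite !ffunE; lia.
have g_k : d k <= g k by move: (le_hg k); rewrite !ffunE; nia.
have eg := G_eq_xpow Gg g_k.
have le_ba : mdiv b (madd a (xpow k 1)).
  move=> i; rewrite -(leq_pmul2r (d_gt0 i)); move: (le_hg i); rewrite eg !ffunE.
  by case: (i =P k) => [->|] /=; nia.
have [j e_ab] := mdiv_exchange le_ba sba.
have eh : h = xpow j (d j).
  have [_ min_j] := G_xpow j; apply: min_j => // i.
  move: (le_hg i) (congr1 (fun x : mono n => x i * d i) e_ab).
  by rewrite eg !ffunE; case: (i =P j) => [->|]; case: (_ =P k) => [->|] /=; nia.
by rewrite eh eg -!mupow_xpow1 ![madd (mupow (xpow _ _)) _]maddC -!mupow_madd e_ab.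
Qed.

Lemma in_box_quotient g a b :
  G I g -> asum b = asum a -> in_box d a (madd g (mupow b)) ->
  I [ffun i => madd g (mupow b) i - a i * d i].
Proof.
move=> Gg sba box; case: (asum_eq_cases (esym sba)) => [<- | [k lt_ba]].
  by have [Ig _] := Gg; apply: I_ideal Ig _ => i; rewrite !ffunE addnK.
have g_k : d k <= g k by have /andP[+ _] := box k; rewrite !ffunE; nia.
have eg := G_eq_xpow Gg g_k.
have le_ab : mdiv a (madd b (xpow k 1)).
  move=> i; rewrite -(leq_pmul2r (d_gt0 i)); have /andP[+ _] := box i.
  by rewrite eg !ffunE; case: (i =P k) => [->|] /=; nia.
have [j e_ab] := mdiv_exchange le_ab (esym sba).
suff -> : [ffun i => madd g (mupow b) i - a i * d i] = xpow j (d j) by apply: I_xpow.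
apply/ffunP => i; move: (congr1 (fun x : mono n => x i * d i) e_ab).
by rewrite eg !ffunE; case: (i =P j) => [->|]; case: (_ =P k) => [->|] /=; nia.
Qed.

Lemma imulJ_sub_ipow2 m : imul I (Jpure d) m -> ipow I 2 m.
Proof.
move=> [a [s [Ia [_ [k ->] le_ks] le_m]]].
by exists a, s; split => //; apply/ipow1/(I_ideal (I_xpow k) le_ks).
Qed.

Lemma ipow2_sub_imulJ m : very_good I d -> ipow I 2 m -> imul I (Jpure d) m.
Proof.
move=> [good_I Ia_I] I2m; have [m0 Gm0 le_m] := G_exists I2m.
have [a [sa box]] := good_I 2 isT m0 Gm0.
have Iq : I [ffun i => m0 i - a i * d i].
  by apply/(Ia_I a); exists [ffun i => m0 i - a i * d i] => //; exists m0; rewrite sa.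
have [k [a' [ea _]]] := asum_succ_split sa.
exists [ffun i => m0 i - a i * d i], (xpow k (d k)); split => //.
  by exists (xpow k (d k)) => //; exists k.
move=> i; have /andP[+ _] := box i; move: (le_m i).
by rewrite ea !ffunE; case: (i =P k) => [->|] /=; nia.
Qed.

Section SquareEquation.
Hypothesis ipow2_eq : ideal_eq (ipow I 2) (imul I (Jpure d)).

Lemma ipow_mupow_div l m :
  ipow I l.+1 m -> exists h b, [/\ I h, asum b = l & mdiv (madd h (mupow b)) m].
Proof.
elim: l m => [|l IH] m [a [c [Ia Ic le_m]]].
  exists a, [ffun => 0]; split => //; first by rewrite /asum big1 // => i _; rewrite ffunE.
  by move=> i; move: (le_m i); rewrite !ffunE; lia.
have [h [b [Ih sb le_c]]] := IH c Ic.
have [h' [s [Ih' [_ [k ->] le_ks] le_ah]]] : imul I (Jpure d) (madd a h).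
  by apply/ipow2_eq/ipow2_madd.
exists h', (madd b (xpow k 1)); split => //; first by rewrite asum_madd asum_xpow sb addn1.
rewrite mupow_madd mupow_xpow1 => i.
by move: (le_m i) (le_c i) (le_ah i) (le_ks i); rewrite !ffunE; lia.
Qed.

Lemma G_ipowP l m :
  G (ipow I l.+1) m <-> exists g b, [/\ G I g, asum b = l & m = madd g (mupow b)].
Proof.
split=> [[Im min_m] | [g [b [Gg sb ->]]]].
  have [h [b [Ih sb le_m]]] := ipow_mupow_div Im.
  have [g Gg le_gh] := G_exists Ih; have [Ig _] := Gg.
  exists g, b; split => //; apply/esym/min_m; first exact: ipow_mupow.
  exact: mdiv_trans (mdiv_madd2r _ le_gh) le_m.
have [Ig _] := Gg; split => [|m' Im' le_m']; first exact: ipow_mupow.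
have [h [b' [Ih sb' le_hm']]] := ipow_mupow_div Im'.
have e := mdiv_mupow_eq Ih Gg (etrans sb' (esym sb)) (mdiv_trans le_hm' le_m').
by apply: mdiv_anti => //; rewrite -e.
Qed.

Lemma good_of_ipow2_eq : good I d.
Proof.
move=> [//|l] _ m /G_ipowP [g [b [Gg sb ->]]].
by exists b; split; [| exact: in_box_mupow].
Qed.

Lemma Ia_eq_I a : ideal_eq (Ia I d a) I.
Proof.
move=> q; split=> [[s [m [/G_ipowP [g [b [Gg sb ->]]] box ->]] le_sq] | Iq].
  exact: I_ideal (in_box_quotient Gg sb box) le_sq.
have [g Gg le_gq] := G_exists Iq.
exists g => //; exists (madd g (mupow a)); split.
- by apply/G_ipowP; exists g, a.
- exact: in_box_mupow.
- by apply/ffunP => i; rewrite !ffunE addnK.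
Qed.

End SquareEquation.

End PurePowers.

Theorem mainTheorem18 (n : nat) (I : mset n) (d : 'I_n -> nat)
  (hI : m_primary I)
  (hd : forall i, 1 <= d i /\ G I (xpow i (d i))) :
  very_good I d <-> ideal_eq (ipow I 2) (imul I (Jpure d)).
Proof.
have [I_ideal _] := hI.
have d_gt0 i : 0 < d i by case: (hd i).
have G_xpow i : G I (xpow i (d i)) by case: (hd i).
split=> [vgI m | ipow2_eq].
  by split; [apply: ipow2_sub_imulJ | apply: imulJ_sub_ipow2].
by split; [apply: good_of_ipow2_eq | move=> a; apply: Ia_eq_I].
Qed.
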